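(* Let $S_A>0$, $c_{\mathrm{TX}}>0$, $\phi>0$, $\theta=\phi/c_{\mathrm{TX}}$, $B\geq1$ an integer, and $0<\lambda<\lambda_{\mathrm{th}}=\left(\sqrt{1+1/S_A}+\sqrt{\theta}\right)^{-2}$. Let $$v_{\mathrm{th}}(\lambda,0)=\sqrt{\lambda\theta}+\frac{\lambda}{2}+\sqrt{\lambda}\sqrt{\sqrt{\lambda\theta}+\frac{\lambda}{4}+\frac{1}{S_A}}.$$ For $V_k\in(0,1]$, $\zeta\geq0$, $S_M\geq0$, let $\rho(\zeta)=\zeta e^{-\zeta}$, $\mathcal B_B(r;\rho)=\binom{B}{r}\rho^r(1-\rho)^{B-r}$, $\hat\nu(V,\Lambda)=V/(1+V\Lambda)$, and $$f(\zeta,S_M,V_k)=\sum_{r=0}^B\mathcal B_B(r;\rho(\zeta))\,\hat\nu\left(V_k,\frac{rS_AS_M}{S_A+S_M}\right)+\lambda\zeta B(1+\theta S_M).$$ The myopic policy $(\zeta^{(MP)}(V_k),S_M^{(MP)}(V_k))$ is a minimizer of $f(\cdot,\cdot,V_k)$ over $\zeta\geq0$, $S_M\geq0$ (with the convention $S_M=0$ when $\zeta=0$). Then: (i) if $V_k\leq v_{\mathrm{th}}(\lambda,0)$, then $(\zeta^{(MP)}(V_k),S_M^{(MP)}(V_k))=(0,0)$; (ii) otherwise, $(\zeta,S_M)=(\zeta^{(MP)}(V_k),S_M^{(MP)}(V_k))$ satisfies $\zeta\in(0,1)$, $S_M>0$, and simultaneously solves $h(S_M,\zeta,V_k)=0$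 and $g(S_M,\zeta,V_k)=0$, where, with $R\sim\mathcal B_B(\cdot;\rho(\zeta))$, $$h(S_M,\zeta,V_k)=-\mathbb E\left[\hat\nu\left(V_k,\frac{RS_AS_M}{S_A+S_M}\right)^2\frac{RS_A^2}{(S_A+S_M)^2}\right]+\lambda\zeta B\theta,$$ $$g(S_M,\zeta,V_k)=\mathbb E\left[\hat\nu\left(V_k,\frac{RS_AS_M}{S_A+S_M}\right)\frac{R-\rho(\zeta)B}{\rho(\zeta)(1-\rho(\zeta))}\right]+\lambda B\frac{e^{\zeta}}{1-\zeta}(1+\theta S_M).$$ Moreover, $$0<\zeta^{(MP)}(V_k)<\min\left\{1,2\ln\left(\frac{V_k}{\sqrt{\lambda\theta}}\right)\right\}$$ and $S_{M,\mathrm{th}}^{\min}\leq S_M^{(MP)}(V_k)\leq S_{M,\mathrm{th}}^{\max}$, where $$S_{M,\mathrm{th}}^{\min}=\frac{-\lambda\theta S_A-\lambda(1+V_kS_A)+V_k^2S_A-\sqrt{[(\lambda\theta+V_k^2)S_A-\lambda(1+V_kS_A)]^2-4\lambda\theta V_k^2S_A^2}}{2\lambda\theta(1+V_kS_A)},$$ $$S_{M,\mathrm{th}}^{\max}=\min\left\{\frac{-\lambda\theta S_A-\lambda(1+V_kS_A)+V_k^2S_A}{2\lambda\theta(1+V_kS_A)}+\frac{\sqrt{[(\lambda\theta+V_k^2)-\lambda(1/S_A+V_k)]^2-4\lambda\theta V_k^2}}{2\lambda\theta(1/S_A+V_k)},\ S_A\left(\frac{V_k}{\sqrt{\lambda\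theta}}-1\right)\right\}.$$
   Context: Decentralized sensing scheme in the large-network limit: $V_k$ is the fusion center's prior variance; each of infinitely many sensors activates with a probability such that the normalized activation probability per channel is $\zeta$, chooses one of $B$ channels uniformly (collision channel), and, if active, measures with local measurement SNR $S_M$ and ambient SNR $S_A$; the number $R$ of successful transmissions is Binomial with $B$ trials and success probability $\rho(\zeta)=\zeta e^{-\zeta}$, and the aggregate SNR is $RS_AS_M/(S_A+S_M)$. The cost term $\lambda\zeta B(1+\theta S_M)$ is the normalized expected sensing-transmission cost weighted by the Lagrange multiplier $\lambda$. *)

From Stdlib Require Import Reals.
Open Scope R_scope.

Definition rho (z : R) : R := z * exp (- z).

Definition binom_pmf (B r : nat) (p : R) : R :=
  C B r * p ^ r * (1 - p) ^ (B - r).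

Definition binom_E (B : nat) (p : R) (F : nat -> R) : R :=
  sum_f_R0 (fun r => binom_pmf B r p * F r) B.

Definition nu_hat (V L : R) : R := V / (1 + V * L).

Definition aggSNR (SA SM : R) (r : nat) : R := INR r * SA * SM / (SA + SM).

Definition f_obj (lam theta SA : R) (B : nat) (z SM V : R) : R :=
  binom_E B (rho z) (fun r => nu_hat V (aggSNR SA SM r))
  + lam * z * INR B * (1 + theta * SM).

Definition h_fun (lam theta SA : R) (B : nat) (SM z V : R) : R :=
  - binom_E B (rho z)
      (fun r => (nu_hat V (aggSNR SA SM r)) ^ 2 * (INR r * SA ^ 2 / (SA + SM) ^ 2))
  + lam * z * INR B * theta.

Definition g_fun (lam theta SA : R) (B : nat) (SM z V : R) : R :=
  binom_E B (rho z)
      (fun r => nu_hat V (aggSNR SA SM r) *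
                ((INR r - rho z * INR B) / (rho z * (1 - rho z))))
  + lam * INR B * (exp z / (1 - z)) * (1 + theta * SM).

Definition lam_th (theta SA : R) : R :=
  / (sqrt (1 + 1 / SA) + sqrt theta) ^ 2.

Definition v_th (lam theta SA : R) : R :=
  sqrt (lam * theta) + lam / 2
  + sqrt lam * sqrt (sqrt (lam * theta) + lam / 4 + 1 / SA).

Definition SM_th_min (lam theta SA V : R) : R :=
  (- lam * theta * SA - lam * (1 + V * SA) + V ^ 2 * SA
   - sqrt (((lam * theta + V ^ 2) * SA - lam * (1 + V * SA)) ^ 2
           - 4 * lam * theta * V ^ 2 * SA ^ 2))
  / (2 * lam * theta * (1 + V * SA)).

Definition SM_th_max (lam theta SA V : R) : R :=
  Rmin
    ((- lam * theta * SA - lam * (1 + V * SA) + V ^ 2 * SA)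
       / (2 * lam * theta * (1 + V * SA))
     + sqrt (((lam * theta + V ^ 2) - lam * (1 / SA + V)) ^ 2
             - 4 * lam * theta * V ^ 2)
       / (2 * lam * theta * (1 / SA + V)))
    (SA * (V / sqrt (lam * theta) - 1)).

Definition is_myopic (lam theta SA : R) (B : nat) (V z SM : R) : Prop :=
  0 <= z /\ 0 <= SM /\ (z = 0 -> SM = 0) /\
  forall z' SM', 0 <= z' -> 0 <= SM' ->
    f_obj lam theta SA B z SM V <= f_obj lam theta SA B z' SM' V.

From Stdlib Require Import Reals Lra Psatz.
From Coquelicot Require Import Coquelicot.
Open Scope R_scope.

(* Since r |-> nu_hat V (r L) is convex, its chord through r = 0 and r = 1 gives
   f (z, S) >= V + B z (lam (1 + theta S) - exp (- z) A(S)), where A(S) is the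
   variance drop caused by a single success, while f (0, S) = V.  Clearing
   denominators, lam (1 + theta S) - A(S) has the sign of the quadratic
   Q(S) = lam SA (sqrt theta w S - 1)^2 + S SA (lam (sqrt theta + w)^2 - V^2)
   with w = sqrt (1/SA + V), and V <= v_th exactly when lam (sqrt theta + w)^2 >= V^2.
   Below the threshold Q >= 0, so every z > 0 costs more than staying idle.  Above
   it Q < 0 at S = 1 / (sqrt theta w), so d f / d z (0, S) < 0 and idling is not
   optimal; the minimizer therefore has z > 0 and lam (1 + theta S) < exp (- z) A(S),
   which yields Q(S) < 0 (hence the bounds on S) and the bound on z.  Moreover z < 1:
   for z > 1 the value rho z is already taken on [0, 1) at lower cost, and at z = 1
   the z-derivative of f reduces to the positive cost rate.  Finally h = g = 0 are
   the first-order conditions at the interior minimizer. *)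

Lemma is_derive_sum_f_R0 (F : nat -> R -> R) (F' : nat -> R) n x :
  (forall i, (i <= n)%nat -> is_derive (F i) x (F' i)) ->
  is_derive (fun y => sum_f_R0 (fun i => F i y) n) x (sum_f_R0 F' n).
Proof.
  induction n as [|n IH]; intros HF; simpl.
  - apply HF; lia.
  - apply (is_derive_plus (fun y => sum_f_R0 (fun i => F i y) n) (F (S n))).
    + apply IH; intros; apply HF; lia.
    + apply HF; lia.
Qed.

Lemma binom_pmf_ge0 B r p : 0 <= p <= 1 -> 0 <= binom_pmf B r p.
Proof.
  intros Hp; unfold binom_pmf, Binomial.C.
  assert (0 < INR (Factorial.fact B)
              / (INR (Factorial.fact r) * INR (Factorial.fact (B - r)))).
  { apply Rdiv_lt_0_compat; [|apply Rmult_lt_0_compat]; apply INR_fact_lt_0. }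
  apply Rmult_le_pos; [apply Rmult_le_pos|]; try apply pow_le; lra.
Qed.

Lemma binom_pmf_sum B p : sum_f_R0 (fun r => binom_pmf B r p) B = 1.
Proof.
  unfold binom_pmf; rewrite <- binomial.
  replace (p + (1 - p)) with 1 by ring; apply pow1.
Qed.

(* Differentiate the binomial formula for (x + (1 - p))^B at x = p. *)
Lemma binom_pmf_mean B p :
  sum_f_R0 (fun r => binom_pmf B r p * INR r) B = INR B * p.
Proof.
  set (q := 1 - p).
  assert (Hlhs : is_derive (fun x => (x + q) ^ B) p (INR B * (p + q) ^ Nat.pred B)).
  { auto_derive; auto; ring. }
  assert (Hrhs : is_derive
      (fun x => sum_f_R0 (fun i => Binomial.C B i * x ^ i * q ^ (B - i)) B) p
      (sum_f_R0 (fun i => Binomial.C B i * (INR i * p ^ Nat.pred i) * q ^ (B - i)) B)).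
  { apply (is_derive_sum_f_R0 (fun i x => Binomial.C B i * x ^ i * q ^ (B - i))).
    intros i _; auto_derive; auto; ring. }
  apply (is_derive_ext _ _ _ _ (fun x => binomial x q B)) in Hlhs.
  pose proof (is_derive_unique _ _ _ Hlhs) as E1.
  pose proof (is_derive_unique _ _ _ Hrhs) as E2.
  rewrite E1 in E2; unfold q in E2.
  replace (p + (1 - p)) with 1 in E2 by ring; rewrite pow1, Rmult_1_r in E2.
  rewrite E2, Rmult_comm, scal_sum.
  apply sum_eq; intros [|i] _; unfold binom_pmf, q; simpl; ring.
Qed.

Lemma binom_E_ext B p F G :
  (forall r, F r = G r) -> binom_E B p F = binom_E B p G.
Proof. intros FG; unfold binom_E; apply sum_eq; intros r _; rewrite FG; ring. Qed.

Lemma binom_E_le B p F G : 0 <= p <= 1 ->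
  (forall r, F r <= G r) -> binom_E B p F <= binom_E B p G.
Proof.
  intros Hp FG; unfold binom_E; apply sum_Rle; intros r _.
  apply Rmult_le_compat_l; [apply binom_pmf_ge0 | apply FG]; auto.
Qed.

Lemma binom_E_affine B p a b :
  binom_E B p (fun r => a + b * INR r) = a + b * (INR B * p).
Proof.
  unfold binom_E.
  rewrite (sum_eq _ (fun r => binom_pmf B r p * a + binom_pmf B r p * INR r * b))
    by (intros; ring).
  rewrite plus_sum, <- !scal_sum, binom_pmf_sum, binom_pmf_mean; ring.
Qed.

Lemma binom_E_at_0 B F : binom_E B 0 F = F 0%nat.
Proof.
  unfold binom_E.
  enough (Hn : forall n, sum_f_R0 (fun r => binom_pmf B r 0 * F r) n = F 0%nat) by apply Hn.
  induction n as [|n IH]; simpl; unfold binom_pmf in *.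
  - rewrite C_n_0, Rminus_0_r, pow1; simpl; ring.
  - rewrite IH; simpl; ring.
Qed.

Definition binom_dE (B : nat) (p : R) (F : nat -> R) : R :=
  sum_f_R0 (fun r => Binomial.C B r *
    (INR r * p ^ Nat.pred r * (1 - p) ^ (B - r)
     - p ^ r * (INR (B - r) * (1 - p) ^ Nat.pred (B - r))) * F r) B.

Lemma is_derive_binom_E B p F : is_derive (fun p => binom_E B p F) p (binom_dE B p F).
Proof.
  unfold binom_E, binom_dE, binom_pmf.
  apply (is_derive_sum_f_R0 (fun r p => Binomial.C B r * p ^ r * (1 - p) ^ (B - r) * F r)).
  intros i _; auto_derive; auto.
  replace (1 + - p) with (1 - p) by ring; ring.
Qed.

Lemma INR_mul_pow_pred n x : INR n * x ^ Nat.pred n * x = INR n * x ^ n.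
Proof. destruct n; simpl; ring. Qed.

Lemma binom_dE_score B p F : 0 < p < 1 ->
  binom_dE B p F = binom_E B p (fun r => F r * ((INR r - p * INR B) / (p * (1 - p)))).
Proof.
  intros Hp; unfold binom_dE, binom_E, binom_pmf; apply sum_eq; intros i Hi.
  assert (Hi' : INR i * p ^ Nat.pred i = INR i * p ^ i / p).
  { rewrite <- INR_mul_pow_pred; field; lra. }
  assert (HBi : INR (B - i) * (1 - p) ^ Nat.pred (B - i)
                = INR (B - i) * (1 - p) ^ (B - i) / (1 - p)).
  { rewrite <- (INR_mul_pow_pred (B - i)); field; lra. }
  rewrite Hi', HBi, minus_INR by exact Hi; field; lra.
Qed.

Lemma binom_C_n_1 n : (1 <= n)%nat -> Binomial.C n 1 = INR n.
Proof.
  intros Hn; destruct n as [|m]; [lia|]; unfold Binomial.C.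
  replace (S m - 1)%nat with m by lia; simpl (Factorial.fact 1).
  rewrite Rfunctions.fact_simpl, mult_INR; simpl (INR 1).
  field; apply INR_fact_neq_0.
Qed.

Lemma binom_dE_at_0 B F : (1 <= B)%nat -> binom_dE B 0 F = INR B * (F 1%nat - F 0%nat).
Proof.
  intros HB; unfold binom_dE.
  enough (Hn : forall n, (1 <= n)%nat -> sum_f_R0 (fun r => Binomial.C B r *
      (INR r * 0 ^ Nat.pred r * (1 - 0) ^ (B - r)
       - 0 ^ r * (INR (B - r) * (1 - 0) ^ Nat.pred (B - r))) * F r) n
      = INR B * (F 1%nat - F 0%nat)) by auto.
  induction n as [|[|n] IH]; intros Hn; [lia| |].
  - simpl; rewrite C_n_0, binom_C_n_1, Nat.sub_0_r, Rminus_0_r, !pow1 by auto; ring.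
  - rewrite tech5, IH by lia; simpl; ring.
Qed.

Lemma nu_hat_bounds V L : 0 < V -> 0 <= L -> 0 <= nu_hat V L <= V.
Proof.
  intros HV HL; unfold nu_hat.
  assert (Hd : 1 <= 1 + V * L) by nra.
  split; [apply Rdiv_le_0_compat; lra|].
  apply Rle_div_l; nra.
Qed.

(* Chord of the convex map r |-> nu_hat V (r L) through r = 0 and r = 1. *)
Lemma nu_hat_chord V L r : 0 < V -> 0 <= L ->
  V - INR r * (V - nu_hat V L) <= nu_hat V (INR r * L).
Proof.
  intros HV HL; unfold nu_hat.
  assert (Hr : 0 <= INR r) by apply pos_INR.
  assert (Hrr : 0 <= INR r * (INR r - 1)).
  { destruct r; [simpl; lra|]; rewrite S_INR; pose proof (pos_INR r); nra. }
  assert (HVL : 0 <= V * L) by nra.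
  assert (Hd1 : 0 < 1 + V * (INR r * L)) by nra.
  assert (E : V / (1 + V * (INR r * L)) - (V - INR r * (V - V / (1 + V * L)))
            = V * (INR r * (INR r - 1)) * (V * L) ^ 2
              / ((1 + V * (INR r * L)) * (1 + V * L))) by (field; lra).
  assert (0 <= V * (INR r * (INR r - 1)) * (V * L) ^ 2
              / ((1 + V * (INR r * L)) * (1 + V * L))).
  { apply Rdiv_le_0_compat; [|apply Rmult_lt_0_compat; lra].
    apply Rmult_le_pos; [nra | apply pow2_ge_0]. }
  lra.
Qed.

Lemma binom_E_nu_hat_lb B p V L : 0 < V -> 0 <= L -> 0 <= p <= 1 ->
  V - INR B * p * (V - nu_hat V L) <= binom_E B p (fun r => nu_hat V (INR r * L)).
Proof.
  intros HV HL Hp.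
  eapply Rle_trans; [|apply (binom_E_le _ _ (fun r => V + - (V - nu_hat V L) * INR r))];
    [rewrite binom_E_affine; lra | exact Hp |].
  intros r; pose proof (nu_hat_chord V L r HV HL); lra.
Qed.

Definition var_drop (V L : R) : R := V - nu_hat V L.

Lemma var_drop_eq V L : 0 < V -> 0 <= L -> var_drop V L = V ^ 2 * L / (1 + V * L).
Proof. intros HV HL; unfold var_drop, nu_hat; field; nra. Qed.

Lemma var_drop_0 V : var_drop V 0 = 0.
Proof. unfold var_drop, nu_hat; rewrite Rmult_0_r, Rplus_0_r; field. Qed.

Lemma var_drop_ge0 V L : 0 < V -> 0 <= L -> 0 <= var_drop V L.
Proof. intros HV HL; unfold var_drop; pose proof (nu_hat_bounds V L HV HL); lra. Qed.

Lemma var_drop_pos V L : 0 < V -> 0 < L -> 0 < var_drop V L.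
Proof.
  intros HV HL; rewrite var_drop_eq by lra.
  apply Rdiv_lt_0_compat; [apply Rmult_lt_0_compat; [apply pow_lt|] | nra]; lra.
Qed.

Lemma var_drop_le V L : 0 < V -> 0 <= L -> var_drop V L <= V ^ 2 * L.
Proof.
  intros HV HL; rewrite var_drop_eq by lra.
  apply Rle_div_l; [nra|].
  pose proof (pow2_ge_0 V); assert (0 <= V ^ 2 * L) by nra; nra.
Qed.

Definition snr1 (SA SM : R) : R := SA * SM / (SA + SM).

Lemma aggSNR_snr1 SA SM r : aggSNR SA SM r = INR r * snr1 SA SM.
Proof. unfold aggSNR, snr1, Rdiv; ring. Qed.

Lemma snr1_0 SA : snr1 SA 0 = 0.
Proof. unfold snr1, Rdiv; ring. Qed.

Lemma snr1_bounds SA SM : 0 < SA -> 0 <= SM -> 0 <= snr1 SA SM <= SM.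
Proof.
  intros HSA HSM; unfold snr1; split.
  - apply Rdiv_le_0_compat; nra.
  - apply Rle_div_l; nra.
Qed.

Lemma snr1_pos SA SM : 0 < SA -> 0 < SM -> 0 < snr1 SA SM.
Proof. intros; unfold snr1; apply Rdiv_lt_0_compat; nra. Qed.

Lemma rho_0 : rho 0 = 0.
Proof. unfold rho; ring. Qed.

Lemma exp_neg_lt_1 z : 0 < z -> exp (- z) < 1.
Proof. intros Hz; rewrite <- exp_0; apply exp_increasing; lra. Qed.

Lemma lt_2_ln_of_exp_lt z a : 0 < a -> exp z < a ^ 2 -> z < 2 * ln a.
Proof.
  intros Ha Hz.
  replace (2 * ln a) with (ln (a ^ 2)) by (rewrite ln_pow by lra; simpl; ring).
  rewrite <- (ln_exp z); apply ln_increasing; [apply exp_pos | exact Hz].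
Qed.

Lemma rho_bounds z : 0 <= z -> 0 <= rho z <= 1.
Proof.
  intros Hz; unfold rho; rewrite exp_Ropp.
  pose proof (exp_pos z).
  split; [apply Rmult_le_pos; [|left; apply Rinv_0_lt_compat]; lra|].
  apply Rmult_le_reg_r with (exp z); [lra|].
  rewrite Rmult_assoc, Rinv_l, Rmult_1_r by lra.
  destruct (Req_dec z 0) as [->|Hz0]; [rewrite exp_0; lra|].
  pose proof (exp_ineq1 z Hz0); lra.
Qed.

Lemma rho_lt_id z : 0 < z -> rho z < z.
Proof. intros Hz; unfold rho; pose proof (exp_neg_lt_1 z Hz); nra. Qed.

Lemma is_derive_rho z : is_derive rho z ((1 - z) * exp (- z)).
Proof. unfold rho; auto_derive; auto; ring. Qed.

Lemma rho_lt_rho_1 z : z <> 1 -> rho z < rho 1.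
Proof.
  intros Hz; unfold rho.
  assert (Hz1 : z - 1 <> 0) by lra.
  pose proof (exp_ineq1 _ Hz1) as Hexp.
  replace (z - 1) with (z + - (1)) in Hexp by ring; rewrite exp_plus in Hexp.
  rewrite (exp_Ropp z); pose proof (exp_pos z).
  apply Rmult_lt_reg_r with (exp z); [lra|].
  rewrite Rmult_1_l, Rmult_assoc, Rinv_l by lra; lra.
Qed.

Lemma rho_attained_below_1 z : 1 < z -> exists t, 0 <= t < 1 /\ rho t = rho z.
Proof.
  intros Hz.
  assert (Hc : continuity (fun t => rho t - rho z)).
  { intros x; apply continuity_pt_minus; [|apply continuity_pt_const; intros ? ?; auto].
    apply derivable_continuous_pt; exists ((1 - x) * exp (- x)).
    apply is_derive_Reals, is_derive_rho. }
  assert (H0 : rho 0 - rho z < 0).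
  { rewrite rho_0; unfold rho; pose proof (exp_pos (- z)); nra. }
  assert (H1 : 0 < rho 1 - rho z) by (pose proof (rho_lt_rho_1 z); lra).
  destruct (IVT _ 0 1 Hc ltac:(lra) H0 H1) as [t [Ht Hrt]].
  exists t; split; [|lra].
  split; [lra|]; destruct (Req_dec t 1) as [->|]; lra.
Qed.

Lemma is_derive_local_min f x l a b : is_derive f x l -> a < x < b ->
  (forall y, a < y < b -> f x <= f y) -> l = 0.
Proof.
  intros Hf Hx Hmin; apply is_derive_Reals in Hf.
  exact (deriv_minimum f a b x (exist _ l Hf) (proj1 Hx) (proj2 Hx)
           (fun y Hay Hyb => Hmin y (conj Hay Hyb))).
Qed.

Lemma is_derive_neg_descent f l : is_derive f 0 l -> l < 0 -> exists x, 0 < x /\ f x < f 0.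
Proof.
  intros Hf Hl; apply is_derive_Reals in Hf.
  destruct (Hf (- l / 2)) as [d Hd]; [lra|].
  pose proof (cond_pos d) as Hd0.
  assert (Hh : d / 2 <> 0) by lra.
  assert (Ha : Rabs (d / 2) < d) by (rewrite Rabs_right; lra).
  specialize (Hd (d / 2) Hh Ha); rewrite Rplus_0_l in Hd.
  apply Rabs_def2 in Hd.
  exists (d / 2); split; [lra|].
  assert (Hq : (f (d / 2) - f 0) / (d / 2) < 0) by lra.
  apply Rlt_div_l in Hq; lra.
Qed.

Lemma f_obj_at_0 lam theta SA B SM V : f_obj lam theta SA B 0 SM V = V.
Proof.
  unfold f_obj; rewrite rho_0, binom_E_at_0, aggSNR_snr1; unfold nu_hat; simpl.
  rewrite Rmult_0_l, Rmult_0_r, Rplus_0_r; field.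
Qed.

Lemma f_obj_lb lam theta SA B z SM V : 0 < SA -> 0 <= SM -> 0 < V -> 0 <= z ->
  V + INR B * z * (lam * (1 + theta * SM) - exp (- z) * var_drop V (snr1 SA SM))
  <= f_obj lam theta SA B z SM V.
Proof.
  intros HSA HSM HV Hz; unfold f_obj.
  rewrite (binom_E_ext _ _ _ (fun r => nu_hat V (INR r * snr1 SA SM)))
    by (intros; rewrite aggSNR_snr1; reflexivity).
  pose proof (binom_E_nu_hat_lb B (rho z) V _ HV (proj1 (snr1_bounds _ _ HSA HSM))
    (rho_bounds z Hz)).
  unfold var_drop, rho in *; nra.
Qed.

Lemma f_obj_lt_of_rho_eq lam theta SA B t z SM V :
  0 < lam -> (1 <= B)%nat -> 0 <= theta * SM -> t < z -> rho t = rho z ->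
  f_obj lam theta SA B t SM V < f_obj lam theta SA B z SM V.
Proof.
  intros Hlam HB HSM Htz Hrho; unfold f_obj; rewrite Hrho.
  assert (0 < INR B) by (apply lt_0_INR; lia).
  assert (0 < lam * INR B * (1 + theta * SM)) by (apply Rmult_lt_0_compat; nra).
  nra.
Qed.

Lemma is_derive_f_obj_SM lam theta SA B z SM V : 0 < SA -> 0 < SM -> 0 < V ->
  is_derive (fun s => f_obj lam theta SA B z s V) SM (h_fun lam theta SA B SM z V).
Proof.
  intros HSA HSM HV; unfold f_obj, h_fun, binom_E.
  rewrite <- (Rmult_1_l (sum_f_R0 _ _)), Ropp_mult_distr_l, scal_sum.
  apply (is_derive_plus
    (fun s => sum_f_R0 (fun r => binom_pmf B r (rho z) * nu_hat V (aggSNR SA s r)) B)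
    (fun s => lam * z * INR B * (1 + theta * s))); [|auto_derive; auto; ring].
  apply (is_derive_sum_f_R0 (fun r s => binom_pmf B r (rho z) * nu_hat V (aggSNR SA s r))).
  intros r _; unfold nu_hat, aggSNR.
  assert (Hnum : 0 <= V * (INR r * SA * SM)).
  { pose proof (pos_INR r); apply Rmult_le_pos; [|apply Rmult_le_pos]; nra. }
  assert (0 <= V * (INR r * SA * SM / (SA + SM))).
  { unfold Rdiv; rewrite <- Rmult_assoc.
    apply Rmult_le_pos; [|left; apply Rinv_0_lt_compat]; lra. }
  unfold Rdiv in *; auto_derive; [repeat split; lra|].
  field; split; lra.
Qed.

Lemma is_derive_f_obj_z lam theta SA B z SM V :
  is_derive (fun t => f_obj lam theta SA B t SM V) z
    ((1 - z) * exp (- z) * binom_dE B (rho z) (fun r => nu_hat V (aggSNR SA SM r))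
     + lam * INR B * (1 + theta * SM)).
Proof.
  unfold f_obj.
  apply (is_derive_plus (fun t => binom_E B (rho t) (fun r => nu_hat V (aggSNR SA SM r)))
                        (fun t => lam * t * INR B * (1 + theta * SM))).
  - apply (is_derive_comp (fun p => binom_E B p (fun r => nu_hat V (aggSNR SA SM r))) rho).
    + apply is_derive_binom_E.
    + apply is_derive_rho.
  - auto_derive; auto; ring.
Qed.

Lemma g_fun_eq lam theta SA B z SM V : 0 < z < 1 ->
  g_fun lam theta SA B SM z V = exp z / (1 - z) *
    ((1 - z) * exp (- z) * binom_dE B (rho z) (fun r => nu_hat V (aggSNR SA SM r))
     + lam * INR B * (1 + theta * SM)).
Proof.
  intros Hz; unfold g_fun.
  assert (Hrho : 0 < rho z < 1).
  { pose proof (rho_lt_id z (proj1 Hz)); unfold rho in *; pose proof (exp_pos (- z)); nra. }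
  rewrite binom_dE_score by exact Hrho.
  rewrite exp_Ropp; pose proof (exp_pos z); field; lra.
Qed.

Lemma is_derive_f_obj_z_at_0 lam theta SA B SM V : (1 <= B)%nat ->
  is_derive (fun t => f_obj lam theta SA B t SM V) 0
    (INR B * (lam * (1 + theta * SM) - var_drop V (snr1 SA SM))).
Proof.
  intros HB.
  replace (INR B * (lam * (1 + theta * SM) - var_drop V (snr1 SA SM))) with
    ((1 - 0) * exp (- 0) * binom_dE B (rho 0) (fun r => nu_hat V (aggSNR SA SM r))
     + lam * INR B * (1 + theta * SM)); [apply is_derive_f_obj_z|].
  rewrite rho_0, binom_dE_at_0, !aggSNR_snr1, Ropp_0, exp_0 by exact HB.
  unfold var_drop, nu_hat; simpl (INR 0); simpl (INR 1).
  rewrite Rmult_0_l, Rmult_0_r, Rplus_0_r, Rmult_1_l, Rdiv_1_r; ring.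
Qed.

Definition gap_poly (lam theta SA V s : R) : R :=
  lam * theta * (1 + V * SA) * s ^ 2
  + (lam * theta * SA + lam * (1 + V * SA) - V ^ 2 * SA) * s + lam * SA.

Lemma gap_denom_pos SA V s : 0 < SA -> 0 <= s -> 0 < V -> 0 < SA + s + V * SA * s.
Proof.
  intros HSA Hs HV.
  assert (0 <= V * SA * s) by (apply Rmult_le_pos; [apply Rmult_le_pos|]; lra); lra.
Qed.

Lemma gap_poly_eq lam theta SA V s : 0 < SA -> 0 <= s -> 0 < V ->
  lam * (1 + theta * s) - var_drop V (snr1 SA s)
  = gap_poly lam theta SA V s / (SA + s + V * SA * s).
Proof.
  intros HSA Hs HV.
  pose proof (snr1_bounds SA s HSA Hs); pose proof (gap_denom_pos SA V s HSA Hs HV).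
  rewrite var_drop_eq by lra; unfold snr1, gap_poly.
  assert (E : 1 + V * (SA * s / (SA + s)) = (SA + s + V * SA * s) / (SA + s))
    by (field; lra).
  rewrite E; field; lra.
Qed.

Lemma gap_poly_sos lam theta SA V s : 0 < SA -> 0 <= theta -> 0 < V ->
  gap_poly lam theta SA V s
  = lam * SA * (sqrt theta * sqrt (1 / SA + V) * s - 1) ^ 2
    + s * SA * (lam * (sqrt theta + sqrt (1 / SA + V)) ^ 2 - V ^ 2).
Proof.
  intros HSA Htheta HV.
  assert (Hw : sqrt (1 / SA + V) * sqrt (1 / SA + V) = 1 / SA + V).
  { apply sqrt_sqrt; assert (0 < 1 / SA) by (apply Rdiv_lt_0_compat; lra); lra. }
  pose proof (sqrt_sqrt theta Htheta) as Hst.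
  set (w := sqrt (1 / SA + V)) in *; set (st := sqrt theta) in *.
  clearbody w st; unfold gap_poly; rewrite <- Hst.
  replace V with (w * w - 1 / SA) by lra.
  field; lra.
Qed.

Lemma le_sqrt_iff x c : 0 <= c -> (x <= sqrt c <-> x <= 0 \/ x ^ 2 <= c).
Proof.
  intros Hc; pose proof (sqrt_sqrt c Hc); pose proof (sqrt_pos c).
  split.
  - intros Hx; destruct (Rle_dec x 0); [left | right]; nra.
  - intros [Hx | Hx]; nra.
Qed.

(* v_th is the positive root of V = sqrt lam (sqrt theta + sqrt (1/SA + V)). *)
Lemma v_th_le_iff lam theta SA V : 0 < lam -> 0 < theta -> 0 < SA -> 0 < V ->
  V <= v_th lam theta SA <-> V ^ 2 <= lam * (sqrt theta + sqrt (1 / SA + V)) ^ 2.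
Proof.
  intros Hlam Htheta HSA HV.
  assert (HiS : 0 < 1 / SA) by (apply Rdiv_lt_0_compat; lra).
  pose proof (sqrt_lt_R0 lam Hlam); pose proof (sqrt_lt_R0 theta Htheta).
  pose proof (sqrt_pos (1 / SA + V)).
  assert (Hm : 0 <= sqrt lam * sqrt theta + lam / 4 + 1 / SA) by nra.
  assert (Hsq : V ^ 2 <= lam * (sqrt theta + sqrt (1 / SA + V)) ^ 2
                <-> V - sqrt lam * sqrt theta <= sqrt (lam * (1 / SA + V))).
  { rewrite sqrt_mult by lra.
    replace (lam * (sqrt theta + sqrt (1 / SA + V)) ^ 2)
      with ((sqrt lam * (sqrt theta + sqrt (1 / SA + V))) ^ 2)
      by (rewrite Rpow_mult_distr, pow2_sqrt by lra; reflexivity).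
    assert (0 <= sqrt lam * (sqrt theta + sqrt (1 / SA + V))) by nra.
    split; intros; nra. }
  assert (Hv : V <= v_th lam theta SA <-> V - sqrt lam * sqrt theta - lam / 2
                 <= sqrt (lam * (sqrt lam * sqrt theta + lam / 4 + 1 / SA))).
  { unfold v_th; rewrite !sqrt_mult by lra; split; lra. }
  rewrite Hv, Hsq, !le_sqrt_iff by nra.
  pose proof (sqrt_sqrt lam (Rlt_le _ _ Hlam)).
  set (d := V - sqrt lam * sqrt theta).
  assert (Ed : V = d + sqrt lam * sqrt theta) by (unfold d; ring); clearbody d.
  split; intros [Hd | Hd]; try (left; lra); try (right; nra).
  destruct (Rle_dec d 0); [left; lra | right].
  assert (0 <= (lam / 2 - d) * d) by (apply Rmult_le_pos; lra).
  assert (0 <= lam * (sqrt lam * sqrt theta))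
    by (apply Rmult_le_pos; [lra | apply Rmult_le_pos; lra]).
  nra.
Qed.

Lemma gap_poly_nonneg lam theta SA V s : 0 < lam -> 0 < theta -> 0 < SA -> 0 < V ->
  0 <= s -> V <= v_th lam theta SA -> 0 <= gap_poly lam theta SA V s.
Proof.
  intros Hlam Htheta HSA HV Hs Hle; apply v_th_le_iff in Hle; auto.
  rewrite gap_poly_sos by lra.
  pose proof (pow2_ge_0 (sqrt theta * sqrt (1 / SA + V) * s - 1)).
  apply Rplus_le_le_0_compat; apply Rmult_le_pos; nra.
Qed.

(* At s = 1 / (sqrt theta sqrt (1/SA + V)) the square in gap_poly_sos vanishes. *)
Lemma gap_poly_neg_witness lam theta SA V : 0 < lam -> 0 < theta -> 0 < SA -> 0 < V ->
  v_th lam theta SA < V -> exists s, 0 < s /\ gap_poly lam theta SA V s < 0.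
Proof.
  intros Hlam Htheta HSA HV Hgt.
  assert (Hlt : lam * (sqrt theta + sqrt (1 / SA + V)) ^ 2 < V ^ 2).
  { apply Rnot_le_lt; rewrite <- v_th_le_iff by auto; lra. }
  assert (0 < sqrt theta * sqrt (1 / SA + V)).
  { apply Rmult_lt_0_compat; apply sqrt_lt_R0; [lra|].
    assert (0 < 1 / SA) by (apply Rdiv_lt_0_compat; lra); lra. }
  exists (/ (sqrt theta * sqrt (1 / SA + V))); split; [apply Rinv_0_lt_compat; lra|].
  rewrite gap_poly_sos by lra.
  set (p := sqrt theta * sqrt (1 / SA + V)) in *.
  rewrite Rinv_r by lra.
  assert (0 < / p * SA) by (apply Rmult_lt_0_compat; [apply Rinv_0_lt_compat|]; lra).
  replace ((1 - 1) ^ 2) with 0 by ring.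
  nra.
Qed.

Lemma quad_lt0_roots a b c s : 0 < a -> a * s ^ 2 + b * s + c < 0 ->
  0 <= b ^ 2 - 4 * a * c /\
  (- b - sqrt (b ^ 2 - 4 * a * c)) / (2 * a) < s /\
  s < (- b + sqrt (b ^ 2 - 4 * a * c)) / (2 * a).
Proof.
  intros Ha Hq.
  assert (E : (2 * a * s + b) ^ 2 = b ^ 2 - 4 * a * c + 4 * a * (a * s ^ 2 + b * s + c))
    by ring.
  assert (HD : (2 * a * s + b) ^ 2 < b ^ 2 - 4 * a * c) by nra.
  assert (HD0 : 0 <= b ^ 2 - 4 * a * c) by (pose proof (pow2_ge_0 (2 * a * s + b)); lra).
  pose proof (sqrt_sqrt _ HD0); pose proof (sqrt_pos (b ^ 2 - 4 * a * c)).
  assert (Habs : - sqrt (b ^ 2 - 4 * a * c) < 2 * a * s + b < sqrt (b ^ 2 - 4 * a * c))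
    by nra.
  split; [exact HD0|]; split; [apply Rlt_div_l | apply Rlt_div_r]; lra.
Qed.

Lemma gap_poly_neg_bounds lam theta SA V s : 0 < lam -> 0 < theta -> 0 < SA -> 0 < V ->
  gap_poly lam theta SA V s < 0 ->
  SM_th_min lam theta SA V <= s /\
  s <= (- lam * theta * SA - lam * (1 + V * SA) + V ^ 2 * SA)
         / (2 * lam * theta * (1 + V * SA))
       + sqrt (((lam * theta + V ^ 2) - lam * (1 / SA + V)) ^ 2 - 4 * lam * theta * V ^ 2)
         / (2 * lam * theta * (1 / SA + V)).
Proof.
  intros Hlam Htheta HSA HV Hneg.
  set (a := lam * theta * (1 + V * SA)).
  set (b := lam * theta * SA + lam * (1 + V * SA) - V ^ 2 * SA).
  set (c := lam * SA).
  assert (Ha : 0 < a) by (unfold a; apply Rmult_lt_0_compat; nra).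
  destruct (quad_lt0_roots a b c s Ha Hneg) as [HD [Hlo Hhi]].
  assert (ED : ((lam * theta + V ^ 2) * SA - lam * (1 + V * SA)) ^ 2
               - 4 * lam * theta * V ^ 2 * SA ^ 2 = b ^ 2 - 4 * a * c)
    by (unfold a, b, c; ring).
  assert (ED' : ((lam * theta + V ^ 2) - lam * (1 / SA + V)) ^ 2 - 4 * lam * theta * V ^ 2
                = (sqrt (b ^ 2 - 4 * a * c) / SA) ^ 2).
  { replace (sqrt (b ^ 2 - 4 * a * c) / SA) with (sqrt (b ^ 2 - 4 * a * c) * / SA)
      by reflexivity.
    rewrite Rpow_mult_distr, pow2_sqrt by exact HD.
    unfold a, b, c; field; lra. }
  split; left.
  - unfold SM_th_min; rewrite ED.
    replace (- lam * theta * SA - lam * (1 + V * SA) + V ^ 2 * SA) with (- b)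
      by (unfold b; ring).
    replace (2 * lam * theta * (1 + V * SA)) with (2 * a) by (unfold a; ring).
    exact Hlo.
  - rewrite ED', sqrt_pow2
      by (apply Rdiv_le_0_compat; [apply sqrt_pos | lra]).
    eapply Rlt_le_trans; [exact Hhi|]; right.
    unfold a, b; field; repeat split; try lra; nra.
Qed.

Section Myopic.

Variables (lam theta SA : R) (B : nat) (V z SM : R).
Hypotheses (Hlam : 0 < lam) (Htheta : 0 < theta) (HSA : 0 < SA) (HB : (1 <= B)%nat)
  (HV : 0 < V) (Hz : 0 <= z) (HSM : 0 <= SM) (Hconv : z = 0 -> SM = 0)
  (Hmin : forall z' SM', 0 <= z' -> 0 <= SM' ->
     f_obj lam theta SA B z SM V <= f_obj lam theta SA B z' SM' V).

Lemma myopic_idle_below : V <= v_th lam theta SA -> z = 0 /\ SM = 0.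
Proof.
  intros Hle.
  destruct (Req_dec z 0) as [Hz0 | Hz0]; [auto | exfalso].
  pose proof (var_drop_ge0 V (snr1 SA SM) HV (proj1 (snr1_bounds SA SM HSA HSM))) as HA.
  pose proof (f_obj_lb lam theta SA B z SM V HSA HSM HV Hz).
  set (A := var_drop V (snr1 SA SM)) in *.
  assert (Hgap : 0 <= lam * (1 + theta * SM) - A).
  { unfold A; rewrite gap_poly_eq by lra.
    apply Rdiv_le_0_compat; [apply gap_poly_nonneg | apply gap_denom_pos]; auto. }
  assert (Hcost : 0 < lam * (1 + theta * SM)) by (apply Rmult_lt_0_compat; nra).
  assert (0 < INR B) by (apply lt_0_INR; lia).
  pose proof (exp_neg_lt_1 z ltac:(lra)); pose proof (exp_pos (- z)).
  assert (Hnet : 0 < lam * (1 + theta * SM) - exp (- z) * A).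
  { destruct (Rle_lt_or_eq_dec 0 A HA) as [HApos | <-]; nra. }
  pose proof (Hmin 0 0 (Rle_refl 0) (Rle_refl 0)) as Hidle.
  rewrite f_obj_at_0 in Hidle.
  assert (0 < INR B * z * (lam * (1 + theta * SM) - exp (- z) * A))
    by (apply Rmult_lt_0_compat; nra).
  lra.
Qed.

Hypothesis Habove : v_th lam theta SA < V.

Lemma myopic_beats_idle : f_obj lam theta SA B z SM V < V.
Proof.
  destruct (gap_poly_neg_witness lam theta SA V Hlam Htheta HSA HV Habove)
    as [s [Hs Hgap]].
  assert (Hnet : lam * (1 + theta * s) - var_drop V (snr1 SA s) < 0).
  { rewrite gap_poly_eq by lra; apply Rlt_div_l; [|lra].
    apply gap_denom_pos; lra. }
  assert (0 < INR B) by (apply lt_0_INR; lia).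
  destruct (is_derive_neg_descent _ _ (is_derive_f_obj_z_at_0 lam theta SA B s V HB))
    as [z0 [Hz0 Hdesc]]; [nra|].
  rewrite f_obj_at_0 in Hdesc.
  pose proof (Hmin z0 s ltac:(lra) ltac:(lra)); lra.
Qed.

Lemma myopic_active :
  0 < z /\ lam * (1 + theta * SM) < exp (- z) * var_drop V (snr1 SA SM).
Proof.
  pose proof (f_obj_lb lam theta SA B z SM V HSA HSM HV Hz).
  pose proof myopic_beats_idle.
  assert (0 < INR B) by (apply lt_0_INR; lia).
  set (net := lam * (1 + theta * SM) - exp (- z) * var_drop V (snr1 SA SM)) in *.
  assert (Hneg : INR B * z * net < 0) by lra.
  destruct (Rle_lt_or_eq_dec 0 z Hz) as [Hzpos | <-]; [|lra].
  split; [exact Hzpos|].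
  destruct (Rlt_le_dec net 0) as [|Hnet]; [unfold net in *; lra|].
  assert (0 <= INR B * z * net) by (apply Rmult_le_pos; nra); lra.
Qed.

Lemma myopic_z_pos : 0 < z.
Proof. exact (proj1 myopic_active). Qed.

Lemma myopic_SM_pos : 0 < SM.
Proof.
  destruct myopic_active as [_ Hact].
  destruct (Rle_lt_or_eq_dec 0 SM HSM) as [|<-]; [assumption|].
  rewrite snr1_0, var_drop_0 in Hact; nra.
Qed.

Lemma myopic_gap_neg : gap_poly lam theta SA V SM < 0.
Proof.
  destruct myopic_active as [Hzpos Hact]; pose proof myopic_SM_pos.
  pose proof (var_drop_pos V _ HV (snr1_pos SA SM HSA ltac:(lra))).
  pose proof (exp_neg_lt_1 z Hzpos); pose proof (exp_pos (- z)).
  assert (Hnet : lam * (1 + theta * SM) - var_drop V (snr1 SA SM) < 0) by nra.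
  rewrite gap_poly_eq in Hnet by lra.
  apply Rlt_div_l in Hnet; [lra|].
  apply gap_denom_pos; lra.
Qed.

Lemma myopic_z_lt_1 : z < 1.
Proof.
  destruct (Rlt_le_dec z 1) as [|Hz1]; [assumption | exfalso].
  destruct (Rle_lt_or_eq_dec 1 z Hz1) as [Hgt | Hz1'].
  - destruct (rho_attained_below_1 z Hgt) as [t [Ht Hrho]].
    pose proof (f_obj_lt_of_rho_eq lam theta SA B t z SM V Hlam HB
                  ltac:(nra) ltac:(lra) Hrho).
    pose proof (Hmin t SM ltac:(lra) HSM); lra.
  - assert (Hd := is_derive_f_obj_z lam theta SA B z SM V).
    apply (is_derive_local_min _ _ _ 0 2) in Hd; [|lra | intros y Hy; apply Hmin; lra].
    rewrite <- Hz1', Rminus_diag, !Rmult_0_l, Rplus_0_l in Hd.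
    assert (0 < INR B) by (apply lt_0_INR; lia).
    assert (0 < lam * INR B * (1 + theta * SM)) by (apply Rmult_lt_0_compat; nra).
    lra.
Qed.

Lemma myopic_h_zero : h_fun lam theta SA B SM z V = 0.
Proof.
  pose proof myopic_SM_pos.
  apply (is_derive_local_min (fun s => f_obj lam theta SA B z s V) SM _ 0 (SM + 1));
    [apply is_derive_f_obj_SM; lra | lra | intros y Hy; apply Hmin; lra].
Qed.

Lemma myopic_g_zero : g_fun lam theta SA B SM z V = 0.
Proof.
  destruct myopic_active as [Hzpos _]; pose proof myopic_z_lt_1.
  rewrite g_fun_eq by lra.
  erewrite (is_derive_local_min _ _ _ 0 1 (is_derive_f_obj_z lam theta SA B z SM V));
    [ring | lra | intros y Hy; apply Hmin; lra].
Qed.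

Lemma myopic_z_lt_log : z < 2 * ln (V / sqrt (lam * theta)).
Proof.
  destruct myopic_active as [_ Hact]; pose proof myopic_SM_pos.
  pose proof (snr1_bounds SA SM HSA HSM) as Hsnr.
  pose proof (var_drop_le V (snr1 SA SM) HV (proj1 Hsnr)).
  pose proof (exp_pos (- z)).
  assert (Hlt : lam * theta * SM < exp (- z) * V ^ 2 * SM).
  { assert (exp (- z) * var_drop V (snr1 SA SM) <= exp (- z) * (V ^ 2 * SM))
      by (apply Rmult_le_compat_l; [lra | pose proof (pow2_ge_0 V); nra]).
    nra. }
  apply Rmult_lt_reg_r in Hlt; [|lra].
  rewrite exp_Ropp in Hlt; pose proof (exp_pos z).
  apply lt_2_ln_of_exp_lt; [apply Rdiv_lt_0_compat; [|apply sqrt_lt_R0]; nra|].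
  unfold Rdiv; rewrite Rpow_mult_distr, pow_inv, pow2_sqrt by nra.
  apply Rmult_lt_reg_r with (lam * theta); [nra|].
  apply Rmult_lt_reg_l with (/ exp z); [apply Rinv_0_lt_compat; lra|].
  replace (/ exp z * (V ^ 2 * / (lam * theta) * (lam * theta))) with (/ exp z * V ^ 2)
    by (field; nra).
  rewrite <- Rmult_assoc, Rinv_l by lra; lra.
Qed.

Lemma myopic_SM_lt : SM < SA * (V / sqrt (lam * theta) - 1).
Proof.
  destruct myopic_active as [Hzpos _]; pose proof myopic_SM_pos.
  pose proof myopic_h_zero as Hh; unfold h_fun in Hh.
  set (K := SA ^ 2 / (SA + SM) ^ 2).
  assert (HK : 0 < K) by (apply Rdiv_lt_0_compat; apply pow_lt; lra).
  assert (Hrho := rho_bounds z Hz); pose proof (rho_lt_id z Hzpos).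
  assert (Hup : binom_E B (rho z)
      (fun r => nu_hat V (aggSNR SA SM r) ^ 2 * (INR r * SA ^ 2 / (SA + SM) ^ 2))
      <= 0 + V ^ 2 * K * (INR B * rho z)).
  { rewrite <- binom_E_affine; apply binom_E_le; [exact Hrho|]; intros r.
    pose proof (pos_INR r).
    rewrite aggSNR_snr1.
    pose proof (nu_hat_bounds V (INR r * snr1 SA SM) HV
      ltac:(pose proof (snr1_bounds SA SM HSA HSM); nra)).
    replace (INR r * SA ^ 2 / (SA + SM) ^ 2) with (INR r * K) by (unfold K, Rdiv; ring).
    assert (nu_hat V (INR r * snr1 SA SM) ^ 2 <= V ^ 2) by (apply pow_incr; lra).
    assert (0 <= INR r * K) by nra.
    nra. }
  assert (0 < INR B) by (apply lt_0_INR; lia).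
  assert (Hlt : lam * theta < (V * SA / (SA + SM)) ^ 2).
  { replace ((V * SA / (SA + SM)) ^ 2) with (V ^ 2 * K) by (unfold K; field; lra).
    apply Rmult_lt_reg_r with (INR B * z); [nra|].
    assert (V ^ 2 * K * (INR B * rho z) < V ^ 2 * K * (INR B * z))
      by (apply Rmult_lt_compat_l; [pose proof (pow_lt V 2 HV); nra | nra]).
    nra. }
  assert (Hsq : sqrt (lam * theta) < V * SA / (SA + SM)).
  { rewrite <- (sqrt_pow2 (V * SA / (SA + SM))) by (apply Rdiv_le_0_compat; nra).
    apply sqrt_lt_1; [nra | apply pow2_ge_0 | exact Hlt]. }
  pose proof (sqrt_lt_R0 (lam * theta) ltac:(nra)).
  apply Rlt_div_r in Hsq; [|lra].
  replace (SA * (V / sqrt (lam * theta) - 1)) with (V * SA / sqrt (lam * theta) - SA)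
    by (field; lra).
  enough (SA + SM < V * SA / sqrt (lam * theta)) by lra.
  apply Rlt_div_r; lra.
Qed.

End Myopic.

Theorem theorem3 (SA cTX phi theta lam : R) (B : nat) :
  0 < SA -> 0 < cTX -> 0 < phi -> theta = phi / cTX -> (1 <= B)%nat ->
  0 < lam -> lam < lam_th theta SA ->
  forall V z SM : R,
    0 < V <= 1 ->
    is_myopic lam theta SA B V z SM ->
    (V <= v_th lam theta SA -> z = 0 /\ SM = 0) /\
    (v_th lam theta SA < V ->
       (0 < z < 1) /\ 0 < SM /\
       h_fun lam theta SA B SM z V = 0 /\
       g_fun lam theta SA B SM z V = 0 /\
       z < Rmin 1 (2 * ln (V / sqrt (lam * theta))) /\
       SM_th_min lam theta SA V <= SM <= SM_th_max lam theta SA V).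
Proof.
  (* lam < lam_th only makes v_th < 1, so that regime (ii) is nonempty for V <= 1. *)
  intros HSA HcTX Hphi Htheta_def HB Hlam _ V z SM [HV _] (Hz & HSM & Hconv & Hmin).
  assert (Htheta : 0 < theta) by (rewrite Htheta_def; apply Rdiv_lt_0_compat; lra).
  split; [intros; apply (myopic_idle_below lam theta SA B V z SM); assumption|].
  intros Habove.
  assert (Hneg : gap_poly lam theta SA V SM < 0)
    by (apply (myopic_gap_neg lam theta SA B V z SM); assumption).
  destruct (gap_poly_neg_bounds lam theta SA V SM Hlam Htheta HSA HV Hneg) as [Hlo Hhi].
  repeat split.
  - apply (myopic_z_pos lam theta SA B V z SM); assumption.
  - apply (myopic_z_lt_1 lam theta SA B V z SM); assumption.
  - apply (myopic_SM_pos lam theta SA B V z SM); assumption.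
  - apply (myopic_h_zero lam theta SA B V z SM); assumption.
  - apply (myopic_g_zero lam theta SA B V z SM); assumption.
  - apply Rmin_glb_lt; [apply (myopic_z_lt_1 lam theta SA B V z SM)
                        | apply (myopic_z_lt_log lam theta SA B V z SM)]; assumption.
  - exact Hlo.
  - apply Rmin_glb; [exact Hhi | left].
    apply (myopic_SM_lt lam theta SA B V z SM); assumption.
Qed.
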